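(* Let $H=(V,E)$ be a finite hypergraph with vertices $V=\{v_1,\dots,v_n\}$ and hyperedges $E=\{e_1,\dots,e_m\}$, and let $\Omega$ be the nilpotent adjacency matrix of $H$ (defined in the context). Let $k\in\mathbb{N}$, $k\ge 1$. (1) For $1\le i\ne j\le n$, $$\zeta_i\,(\Omega^k)_{ij}=\sum_{\substack{I\subseteq [n]\\ |I|=k+1}}\ \sum_{J\subseteq[m]}\omega_{I,J}\,\zeta_I\,\varepsilon_J,$$ where $\omega_{I,J}$ is the number of $k$-paths from $v_i$ to $v_j$ in $H$ whose vertex set is $\{v_t: t\in I\}$ and whose set of hyperedges is $\{e_\ell:\ell\in J\}$. (2) For $1\le i\le n$ and $k\ge 2$, $$(\Omega^k)_{ii}=\sum_{\substack{I\subseteq [n]\\ |I|=k}}\ \sum_{J\subseteq[m]}\omega_{I,J}\,\zeta_I\,\varepsilon_J,$$ where $\omega_{I,J}$ is the number of $k$-cycles in $H$ based at $v_i$ whose vertex set is $\{v_t: t\in I\}$ and whose set of hyperedges is $\{e_\ell:\ell\in J\}$.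
   Context: Algebras: $\mathfrak{Z}_n$ (the $n$-particle zeon algebra) is the commutative real algebra with unit generated by $\zeta_1,\dots,\zeta_n$ subject to $\zeta_i\zeta_j=\zeta_j\zeta_i$ and $\zeta_i^2=0$; for $I\subseteq[n]$, $\zeta_I=\prod_{i\in I}\zeta_i$ ($\zeta_\emptyset=1$), and $\{\zeta_I: I\subseteq[n]\}$ is a basis. $\mathfrak{I}_m$ (the idem-Clifford algebra) is the commutative real algebra with unit generated by $\varepsilon_1,\dots,\varepsilon_m$ subject to $\varepsilon_i\varepsilon_j=\varepsilon_j\varepsilon_i$ and $\varepsilon_i^2=\varepsilon_i$; $\varepsilon_J=\prod_{\ell\in J}\varepsilon_\ell$, and $\{\varepsilon_J\}$ is a basis. Computations take place in the commutative algebra $\mathfrak{Z}_n\otimes\mathfrak{I}_m$, with basis $\{\zeta_I\varepsilon_J\}$. Hypergraph: a hypergraph $H=(V,E)$ is a finite set $V$ with a set $E$ of nonempty subsets of $V$ (hyperedges). Its incidence matrix $C$ is the $n\times m$ matrix with $C_{i\ell}=1$ if $v_i\in e_\ell$ and $0$ otherwise. The nilpotent adjacency matrix of $H$ is $\Omega=XZ$, where $X=C\,\mathrm{diag}(\varepsilon_1,\dots,\varepsilon_m)$ ($n\times m$) and $Z=C^T\mathrm{diag}(\zeta_1,\dots,\zeta_n)$ ($m\times n$); explicitly, for all $i,j$ (including $i=j$), $\Omega_{ij}=\zeta_j\sum_{\ell:\ v_i\in e_\ell,\ v_j\in e_\ell}\varepsilon_\ell$. Walks: a $k$-walk in $H$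 is a sequence $(u_0,f_1,u_1,\dots,f_k,u_k)$ with $u_t\in V$, $f_t\in E$ and $u_{t-1},u_t\in f_t$ for $1\le t\le k$; its vertex set is $\{u_0,\dots,u_k\}$ and its hyperedge set is $\{f_1,\dots,f_k\}$. A $k$-path from $v_i$ to $v_j$ is a $k$-walk with $u_0=v_i$, $u_k=v_j$ and $u_0,\dots,u_k$ pairwise distinct. A $k$-cycle based at $v_i$ is a $k$-walk with $u_0=u_k=v_i$ and $u_0,\dots,u_{k-1}$ pairwise distinct (its vertex set is $\{u_0,\dots,u_{k-1}\}$). *)

From HB Require Import structures.
From mathcomp Require Import all_boot all_order all_algebra.
From mathcomp Require Import reals.
Set Implicit Arguments. Unset Strict Implicit. Unset Printing Implicit Defensive.
Import Order.TTheory GRing.Theory Num.Theory.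
Local Open Scope ring_scope.

(* A hypergraph on vertices v_0..v_{n-1} (type 'I_n) with hyperedges
   e_0..e_{m-1} given by  e : 'I_m -> {set 'I_n}: distinct nonempty subsets. *)
Definition is_hypergraph (n m : nat) (e : 'I_m -> {set 'I_n}) : Prop :=
  injective e /\ (forall l, e l != set0).

(* Generators zeta_i (zeta_i^2 = 0) and eps_l (eps_l^2 = eps_l) in the
   commutative real algebra A, such that {zeta_I eps_J} is a basis of A,
   i.e. A is (isomorphic to) Z_n (x) I_m. *)
Definition zetaI (R : realType) (A : comAlgType R) (n : nat)
  (z : 'I_n -> A) (I : {set 'I_n}) : A := \prod_(i in I) z i.
Definition epsJ (R : realType) (A : comAlgType R) (m : nat)
  (eps : 'I_m -> A) (J : {set 'I_m}) : A := \prod_(l in J) eps l.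

Definition is_zeon_idem_algebra (R : realType) (A : comAlgType R) (n m : nat)
  (z : 'I_n -> A) (eps : 'I_m -> A) : Prop :=
  [/\ forall i, z i * z i = 0,
      forall l, eps l * eps l = eps l,
      forall c : {set 'I_n} -> {set 'I_m} -> R,
        \sum_(I : {set 'I_n}) \sum_(J : {set 'I_m})
           c I J *: (zetaI z I * epsJ eps J) = 0 ->
        forall I J, c I J = 0
    &
      forall a : A, exists c : {set 'I_n} -> {set 'I_m} -> R,
        a = \sum_(I : {set 'I_n}) \sum_(J : {set 'I_m})
              c I J *: (zetaI z I * epsJ eps J)].

(* X = C diag(eps),  Z = C^T diag(zeta),  Omega = X Z. *)
Definition Xmat (R : realType) (A : comAlgType R) (n m : nat)
  (e : 'I_m -> {set 'I_n}) (eps : 'I_m -> A) : 'M[A]_(n, m) :=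
  \matrix_(i < n, l < m) ((i \in e l)%:R * eps l).
Definition Zmat (R : realType) (A : comAlgType R) (n m : nat)
  (e : 'I_m -> {set 'I_n}) (z : 'I_n -> A) : 'M[A]_(m, n) :=
  \matrix_(l < m, j < n) ((j \in e l)%:R * z j).
Definition nil_adj (R : realType) (A : comAlgType R) (n m : nat)
  (e : 'I_m -> {set 'I_n}) (z : 'I_n -> A) (eps : 'I_m -> A) : 'M[A]_n :=
  Xmat e eps *m Zmat e z.

(* A k-walk (u_0, f_1, u_1, ..., f_k, u_k): u : 'I_(k+1) -> V, f : 'I_k -> E,
   where f t (0-indexed) is the hyperedge f_{t+1} joining u_t and u_{t+1}. *)
Definition walk_type (n m k : nat) : finType :=
  ({ffun 'I_k.+1 -> 'I_n} * {ffun 'I_k -> 'I_m})%type.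

Definition is_walk (n m k : nat) (e : 'I_m -> {set 'I_n})
  (w : walk_type n m k) : bool :=
  [forall t : 'I_k,
     (w.1 (widen_ord (leqnSn k) t) \in e (w.2 t)) &&
     (w.1 (lift ord0 t) \in e (w.2 t))].

Definition walk_vset (n m k : nat) (w : walk_type n m k) : {set 'I_n} :=
  [set w.1 t | t : 'I_k.+1].
Definition walk_eset (n m k : nat) (w : walk_type n m k) : {set 'I_m} :=
  [set w.2 t | t : 'I_k].

Definition is_path (n m k : nat) (e : 'I_m -> {set 'I_n}) (i j : 'I_n)
  (w : walk_type n m k) : bool :=
  [&& is_walk e w, w.1 ord0 == i, w.1 ord_max == j & injectiveb w.1].

Definition is_cycle (n m k : nat) (e : 'I_m -> {set 'I_n}) (i : 'I_n)
  (w : walk_type n m k) : bool :=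
  [&& is_walk e w, w.1 ord0 == i, w.1 ord_max == i &
      [forall s : 'I_k.+1, forall t : 'I_k.+1,
         ((s < k)%N && (t < k)%N && (w.1 s == w.1 t)) ==> (s == t)]].

Definition cycle_vset (n m k : nat) (w : walk_type n m k) : {set 'I_n} :=
  [set w.1 t | t : 'I_k.+1 & (t < k)%N].

Definition omega_path (n m k : nat) (e : 'I_m -> {set 'I_n}) (i j : 'I_n)
  (I : {set 'I_n}) (J : {set 'I_m}) : nat :=
  #|[set w : walk_type n m k | [&& is_path e i j w,
        walk_vset w == I & walk_eset w == J]]|.

Definition omega_cycle (n m k : nat) (e : 'I_m -> {set 'I_n}) (i : 'I_n)
  (I : {set 'I_n}) (J : {set 'I_m}) : nat :=
  #|[set w : walk_type n m k | [&& is_cycle e i w,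
        cycle_vset w == I & walk_eset w == J]]|.

From HB Require Import structures.
From mathcomp Require Import all_boot all_order all_algebra.
From mathcomp Require Import reals.
Import GRing.Theory.
Set Implicit Arguments. Unset Strict Implicit. Unset Printing Implicit Defensive.
Local Open Scope ring_scope.

(* Expanding the [k]-th power of [Omega = X Z] entrywise writes [(Omega^k)_ij]
   as a sum over the [k]-walks from [v_i] to [v_j], each weighted by the product
   of the [eps] of its hyperedges and the [zeta] of its vertices [u_1, ..., u_k].
   Idempotency collapses the [eps]-product to [eps_J] for the hyperedge set [J];
   nilsquareness kills every walk with a repeated vertex and turns the other
   [zeta]-products into [zeta_I].  For paths the extra factor [zeta_i] supplies
   [u_0]; for cycles [u_1, ..., u_k] is a rotation of [u_0, ..., u_(k-1)].
   Grouping the surviving walks by [(I, J)] yields the counts [omega_(I,J)]. *)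

Section VertexSequences.
Variable (T : finType).

Definition ffcons k (a : T) (u : {ffun 'I_k -> T}) : {ffun 'I_k.+1 -> T} :=
  [ffun s => if unlift ord0 s is Some t then u t else a].

Lemma ffcons0 k a (u : {ffun 'I_k -> T}) : ffcons a u ord0 = a.
Proof. by rewrite ffunE unlift_none. Qed.

Lemma ffcons_lift k a (u : {ffun 'I_k -> T}) t : ffcons a u (lift ord0 t) = u t.
Proof. by rewrite ffunE liftK. Qed.

Lemma ffcons_max k a (u : {ffun 'I_k.+1 -> T}) : ffcons a u ord_max = u ord_max.
Proof.
have -> : ord_max = lift ord0 (ord_max : 'I_k.+1) by apply: val_inj.
exact: ffcons_lift.
Qed.

Definition fftail k (u : {ffun 'I_k.+1 -> T}) : {ffun 'I_k -> T} :=
  [ffun t => u (lift ord0 t)].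

Lemma fftail_ffcons k a : cancel (@ffcons k a) (@fftail k).
Proof. by move=> u; apply/ffunP => t; rewrite ffunE ffcons_lift. Qed.

Lemma ffcons_fftail k (u : {ffun 'I_k.+1 -> T}) : ffcons (u ord0) (fftail u) = u.
Proof.
apply/ffunP => s; rewrite ffunE; case: unliftP => [t ->|->] //; exact: ffunE.
Qed.

End VertexSequences.

Section MatrixPowerWalks.
Variables (Rg : pzSemiRingType) (n : nat).

Lemma mx_expr_walks (M : 'M[Rg]_n) k i j :
  (M ^+ k) i j = \sum_(u : {ffun 'I_k.+1 -> 'I_n} | (u ord0 == i) && (u ord_max == j))
     \prod_(t < k) M (u (widen_ord (leqnSn k) t)) (u (lift ord0 t)).
Proof.
elim: k i j => [|k IH] i j.
  rewrite expr0 mxE.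
  rewrite (reindex (fun a : 'I_n => [ffun=> a] : {ffun 'I_1 -> 'I_n})) /=; last first.
    exists (fun u => u ord0) => [a|u] _; first by rewrite ffunE.
    by apply/ffunP => s; rewrite ffunE (ord1 s).
  under eq_bigl => a do rewrite !ffunE.
  have [<-|ne] := eqVneq i j.
    by rewrite (big_pred1 i) ?big_ord0 // => a; exact: andbb.
  rewrite big_pred0 // => a; apply/andP => -[/eqP-> ij].
  by rewrite ij in ne.
rewrite exprS -mulmxE mxE (reindex_onto (ffcons i) (@fftail _ _)) /=; last first.
  by move=> u /andP [/eqP <- _]; rewrite ffcons_fftail.
under [RHS]eq_bigl => u do rewrite ffcons0 ffcons_max fftail_ffcons !eqxx andbT /=.
rewrite [RHS](partition_big (fun u : {ffun 'I_k.+1 -> 'I_n} => u ord0) xpredT) //=.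
apply: eq_bigr => a _; rewrite IH big_distrr /=.
apply: eq_big => [u|u /andP [/eqP u0 _]]; first by rewrite andbC.
have widen_lift0 (t : 'I_k) :
  widen_ord (leqnSn k.+1) (lift ord0 t) = lift ord0 (widen_ord (leqnSn k) t).
  exact: val_inj.
have widen0 : widen_ord (leqnSn k.+1) ord0 = ord0 by exact: val_inj.
rewrite big_ord_recl ffcons_lift widen0 ffcons0 u0.
by congr (_ * _); apply: eq_bigr => t _; rewrite widen_lift0 !ffcons_lift.
Qed.
End MatrixPowerWalks.

Lemma prodr_natb (Rg : comPzSemiRingType) (I : finType) (P : pred I) :
  \prod_(t : I) ((P t)%:R : Rg) = [forall t, P t]%:R.
Proof.
have [allP|/forallPn [t /negbTE Pt]] := boolP [forall t, P t].
  by rewrite big1 // => t _; rewrite (forallP allP).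
by rewrite (bigD1 t) //= Pt mul0r.
Qed.

Section NilsquareIdempotentProducts.
Variables (Rg : comPzSemiRingType) (I T : finType).

Lemma prod_nilsq_comp (z : T -> Rg) (u : I -> T) :
  (forall x, z x * z x = 0) ->
  \prod_(s : I) z (u s) = if injectiveb u then \prod_(x in u @: I) z x else 0.
Proof.
move=> zz; case: injectiveP => [inj|/injectiveP/injectivePn [s [t st ust]]].
  by rewrite big_imset //= => a b _ _ /inj.
by rewrite (bigD1 s) //= (bigD1 t) 1?eq_sym //= mulrA -ust zz mul0r.
Qed.

Lemma idem_expS (x : Rg) k : x * x = x -> x ^+ k.+1 = x.
Proof. by move=> xx; elim: k => [|k IH]; rewrite ?expr1 // exprS IH xx. Qed.

Lemma prod_idem_comp (eps : T -> Rg) (f : I -> T) :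
  (forall l, eps l * eps l = eps l) ->
  \prod_(s : I) eps (f s) = \prod_(l in f @: I) eps l.
Proof.
move=> ee; rewrite (partition_big_imset f); apply: eq_bigr => _ /imsetP [s _ ->].
rewrite (eq_bigr (fun=> eps (f s))) => [|t /eqP -> //].
rewrite prodr_const; have : (0 < #|[pred t | f t == f s]|)%N.
  by apply/card_gt0P; exists s; rewrite inE /= eqxx.
by case: #|_| => // k _; rewrite idem_expS.
Qed.

End NilsquareIdempotentProducts.

Section InitialSegment.
Variables (T : finType) (k : nat) (U : 'I_k.+1 -> T).

Lemma imset_ltn_widen :
  [set U s | s : 'I_k.+1 & (s < k)%N] = [set U (widen_ord (leqnSn k) t) | t : 'I_k].
Proof.
apply/setP => x; apply/imsetP/imsetP => [[s]|[t _ ->]].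
  by rewrite inE => ltsk ->; exists (Ordinal ltsk) => //; congr U; apply: val_inj.
by exists (widen_ord (leqnSn k) t); rewrite // inE /= ltn_ord.
Qed.

Lemma injectiveb_widenE :
  [forall s : 'I_k.+1, forall t : 'I_k.+1,
     ((s < k)%N && (t < k)%N && (U s == U t)) ==> (s == t)] =
  injectiveb (fun t : 'I_k => U (widen_ord (leqnSn k) t)).
Proof.
apply/forallP/injectiveP => [distinct t1 t2 Ut12|inj s].
  have := forallP (distinct (widen_ord (leqnSn k) t1)) (widen_ord (leqnSn k) t2).
  by rewrite /= !ltn_ord Ut12 eqxx /= => /eqP[] /val_inj.
apply/forallP => t; apply/implyP => /andP [/andP [ltsk ltk] /eqP Ust].
have widenK (r : 'I_k.+1) (ltrk : (r < k)%N) : widen_ord (leqnSn k) (Ordinal ltrk) = r.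
  exact: val_inj.
apply/eqP; rewrite -(widenK s ltsk) -(widenK t ltk).
by rewrite (inj (Ordinal ltsk) (Ordinal ltk)) // !widenK.
Qed.

End InitialSegment.

Section ClosedSequence.
Variables (T : finType) (k : nat) (U : 'I_k.+2 -> T).
Hypothesis closedU : U ord0 = U ord_max.

Lemma lift0_ordS t : U (lift ord0 t) = U (widen_ord (leqnSn k.+1) (ordS t)).
Proof.
have [ltk|lekt] := ltnP t k.
  by congr U; apply: val_inj; rewrite /= modn_small.
have tk : nat_of_ord t = k by apply/eqP; rewrite eqn_leq lekt -ltnS ltn_ord.
rewrite (_ : widen_ord _ _ = ord0); last first.
  by apply: val_inj; rewrite /= tk modnn.
by rewrite closedU; congr U; apply: val_inj; rewrite /= tk.
Qed.

Lemma imset_lift0_closed :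
  [set U (lift ord0 t) | t : 'I_k.+1] = [set U s | s : 'I_k.+2 & (s < k.+1)%N].
Proof.
rewrite imset_ltn_widen; apply/setP => x.
apply/imsetP/imsetP => [[t _ ->]|[t _ ->]].
  by exists (ordS t); rewrite ?lift0_ordS.
by exists (ord_pred t); rewrite // lift0_ordS ord_predK.
Qed.

Lemma injectiveb_lift0_closed :
  injectiveb (fun t : 'I_k.+1 => U (lift ord0 t)) =
  [forall s : 'I_k.+2, forall t : 'I_k.+2,
     ((s < k.+1)%N && (t < k.+1)%N && (U s == U t)) ==> (s == t)].
Proof.
rewrite injectiveb_widenE (eq_injectiveb lift0_ordS).
apply/injectiveP/injectiveP => inj t1 t2.
  by rewrite -(ord_predK t1) -(ord_predK t2) => /inj ->.
by move/inj/ordS_inj.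
Qed.

End ClosedSequence.

Lemma sum_card_fibres (Rg : pzSemiRingType) (W V E : finType) (Q : pred W)
    (vs : W -> V) (es : W -> E) (P : pred V) (c : V -> E -> Rg) :
  (forall w, Q w -> P (vs w)) ->
  \sum_(I | P I) \sum_(J : E) #|[set w | [&& Q w, vs w == I & es w == J]]|%:R * c I J =
  \sum_(w : W) (Q w)%:R * c (vs w) (es w).
Proof.
have card_mulr (p : pred W) (x : Rg) :
    #|[set w | p w]|%:R * x = \sum_(w : W) (p w)%:R * x.
  rewrite -sum1_card natr_sum mulr_suml big_mkcond; apply: eq_bigr => w _.
  by rewrite inE; case: (p w); rewrite ?mul1r ?mul0r.
move=> QP; under eq_bigr => I _ do under eq_bigr => J _ do rewrite card_mulr.
under eq_bigr => I _ do rewrite exchange_big.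
rewrite exchange_big /=; apply: eq_bigr => w _.
have [/QP Pvw|_] /= := boolP (Q w); last first.
  by rewrite mul0r big1 // => I _; rewrite big1 // => J _; rewrite mul0r.
rewrite (bigD1 (vs w)) //= eqxx [X in _ + X]big1 ?addr0; last first.
  by move=> I /andP [_ /negbTE vsI]; rewrite big1 // => J _; rewrite eq_sym vsI mul0r.
rewrite (bigD1 (es w)) //= eqxx [X in _ + X]big1 ?addr0 ?mul1r //.
by move=> J /negbTE esJ; rewrite eq_sym esJ mul0r.
Qed.

Section NilpotentAdjacency.
Variables (R : realType) (A : comAlgType R) (n m : nat).
Variables (e : 'I_m -> {set 'I_n}) (z : 'I_n -> A) (eps : 'I_m -> A).
Hypothesis z_nilsq : forall i, z i * z i = 0.
Hypothesis eps_idem : forall l, eps l * eps l = eps l.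

Local Notation Omega := (nil_adj e z eps).

Lemma nil_adjE a b :
  Omega a b = \sum_(l < m) ((a \in e l) && (b \in e l))%:R * (eps l * z b).
Proof.
rewrite mxE; apply: eq_bigr => l _; rewrite !mxE.
by rewrite mulrACA -natrM mulnb.
Qed.

Lemma nil_adj_expr_walks k i j : (Omega ^+ k) i j =
  \sum_(w : walk_type n m k | (w.1 ord0 == i) && (w.1 ord_max == j))
    (is_walk e w)%:R * (epsJ eps (walk_eset w) * \prod_(t < k) z (w.1 (lift ord0 t))).
Proof.
rewrite mx_expr_walks.
under eq_bigr => u _.
  under eq_bigr => t _ do rewrite nil_adjE.
  rewrite bigA_distr_bigA /=.
  over.
rewrite pair_big_dep /=.
apply: eq_big => [[u f]|[u f] _] /=; first by rewrite andbT.
by rewrite big_split /= big_split /= prodr_natb prod_idem_comp.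
Qed.

Lemma nil_adj_expr_paths k i j :
  z i * (Omega ^+ k) i j =
  \sum_(I : {set 'I_n} | #|I| == k.+1) \sum_(J : {set 'I_m})
     (omega_path k e i j I J)%:R * (zetaI z I * epsJ eps J).
Proof.
rewrite /omega_path sum_card_fibres; last first.
  by move=> w /and4P [_ _ _ /injectiveP inj]; rewrite card_imset ?card_ord.
rewrite nil_adj_expr_walks mulr_sumr big_mkcond /=; apply: eq_bigr => w _.
rewrite /is_path; case: eqP => [w0|_]; case: (w.1 ord_max == j); rewrite ?andbF ?mul0r //.
have zeta_path : z i * \prod_(t < k) z (w.1 (lift ord0 t)) =
    if injectiveb w.1 then zetaI z (walk_vset w) else 0.
  by rewrite -w0 -(big_ord_recl _ (fun s => z (w.1 s))) prod_nilsq_comp.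
rewrite (mulrCA (z i)) (mulrCA (z i)) zeta_path.
by case: is_walk; case: injectiveb; rewrite ?mul0r ?mulr0 ?mul1r // mulrC.
Qed.

Lemma nil_adj_expr_cycles k i :
  (Omega ^+ k.+1) i i =
  \sum_(I : {set 'I_n} | #|I| == k.+1) \sum_(J : {set 'I_m})
     (omega_cycle k.+1 e i I J)%:R * (zetaI z I * epsJ eps J).
Proof.
rewrite /omega_cycle sum_card_fibres; last first.
  move=> w /and4P [_ /eqP w0 /eqP wmax].
  have closed : w.1 ord0 = w.1 ord_max by rewrite w0 wmax.
  rewrite -injectiveb_lift0_closed // => /injectiveP inj.
  by rewrite /cycle_vset -imset_lift0_closed // card_imset ?card_ord.
rewrite nil_adj_expr_walks big_mkcond /=; apply: eq_bigr => w _.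
rewrite /is_cycle; case: eqP => [w0|_]; case: eqP => [wmax|_]; rewrite ?andbF ?mul0r //.
have closed : w.1 ord0 = w.1 ord_max by rewrite w0 wmax.
rewrite prod_nilsq_comp // injectiveb_lift0_closed // /cycle_vset -imset_lift0_closed //.
by case: is_walk; case: [forall _, _]; rewrite ?mul0r ?mulr0 ?mul1r // mulrC.
Qed.

End NilpotentAdjacency.

Theorem mainTheorem1 (R : realType) (A : comAlgType R) (n m : nat)
  (e : 'I_m -> {set 'I_n}) (z : 'I_n -> A) (eps : 'I_m -> A) :
  is_hypergraph e ->
  is_zeon_idem_algebra z eps ->
  (forall (k : nat) (i j : 'I_n), (1 <= k)%N -> i != j ->
     z i * (nil_adj e z eps ^+ k) i j =
     \sum_(I : {set 'I_n} | #|I| == k.+1) \sum_(J : {set 'I_m})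
        (omega_path k e i j I J)%:R * (zetaI z I * epsJ eps J))
  /\
  (forall (k : nat) (i : 'I_n), (2 <= k)%N ->
     (nil_adj e z eps ^+ k) i i =
     \sum_(I : {set 'I_n} | #|I| == k) \sum_(J : {set 'I_m})
        (omega_cycle k e i I J)%:R * (zetaI z I * epsJ eps J)).
Proof.
move=> _ [z_nilsq eps_idem _ _]; split.
  by move=> k i j _ _; exact: nil_adj_expr_paths.
by move=> [|k] i // _; exact: nil_adj_expr_cycles.
Qed.
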